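(* Let $F$ be an algebraically closed field with $\operatorname{char}F>3$, $R=F[[x,y]]$, and let $f=(f_1,f_2)\in R^2$ be a unimodal isolated complete intersection singularity with $\operatorname{ord}(f_1)=3$ and $\operatorname{ord}(f_2)\ge 3$. Then the $3$-jet $j_3(f)$ is contact equivalent (under the $3$-jet contact group acting on $R^2/\mathfrak m^4R^2$) to one of $(x^3,0)$, $(x^3,x^2y)$, $(x^3,xy^2)$, $(x^3,y^3+x^2y)$, $(x^3,y^3)$, $(x^2y,0)$, $(x^2y,xy^2)$, $(x^2y,x^3+xy^2)$, $(x^3+x^2y,\,y^3+\lambda x^2y)$ with $\lambda\neq 0$, $(x^2y,x^3+y^3)$, $(x^3+xy^2,0)$.
   Context: $\mathfrak m=\langle x,y\rangle$. $f=(f_1,f_2)\in R^2$ with $f_i\in\mathfrak m$ is an ICIS if $f_1,f_2$ is a regular sequence and $\mathfrak m^k\subset\langle f_1,f_2\rangle+I_2(J(f))$ for some $k$. $j_3(f)$ is the image of $f$ in $J_3=R^2/\mathfrak m^4R^2$; the contact jet group $\mathcal K_3=\{(j_3(U),j_3(\phi))\}$ ($U\in GL(2,R)$, $\phi\in\operatorname{Aut}(R)$) acts by $j_3(f)\mapsto j_3(U\cdot\phi(f))$. Unimodal means $\mathcal K$-modality $1$, the $\mathcal K$-modality being the modality (Arnold, Greuel–Nguyen) of a sufficiently high jet under the contact jet group action. *)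

From HB Require Import structures.
From mathcomp Require Import all_boot all_order all_algebra.
Set Implicit Arguments. Unset Strict Implicit. Unset Printing Implicit Defensive.
Import GRing.Theory.
Local Open Scope ring_scope.

Section PowerSeries.
Variable F : fieldType.

(* f i j = coefficient of x^i y^j in f ∈ R = F[[x,y]] *)
Definition ps := nat -> nat -> F.
Definition ps_eq (f g : ps) := forall i j, f i j = g i j.

Definition ps0 : ps := fun _ _ => 0.
Definition psmon (a b : nat) : ps :=
  fun i j => if (i == a) && (j == b) then 1 else 0.
Definition ps1 : ps := psmon 0 0.
Definition psadd (f g : ps) : ps := fun i j => f i j + g i j.
Definition psopp (f : ps) : ps := fun i j => - f i j.
Definition pssub (f g : ps) : ps := psadd f (psopp g).
Definition psscale (c : F) (f : ps) : ps := fun i j => c * f i j.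
Definition psmul (f g : ps) : ps :=
  fun i j => \sum_(a < i.+1) \sum_(b < j.+1) f a b * g (i - a)%N (j - b)%N.
Definition psexp (f : ps) (n : nat) : ps := iter n (psmul f) ps1.
Definition psdx (f : ps) : ps := fun i j => i.+1%:R * f i.+1 j.
Definition psdy (f : ps) : ps := fun i j => j.+1%:R * f i j.+1.
(* substitution f(u,v), for u, v in the maximal ideal (finite sums then) *)
Definition pscomp (f u v : ps) : ps :=
  fun i j => \sum_(a < (i + j).+1) \sum_(b < ((i + j).+1 - a)%N)
               f a b * psmul (psexp u a) (psexp v b) i j.

Definition in_m (f : ps) := f 0%N 0%N = 0.
Definition in_mpow (k : nat) (f : ps) := forall i j, (i + j < k)%N -> f i j = 0.
Definition ps_ord_eq (f : ps) (k : nat) :=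
  in_mpow k f /\ exists i j, (i + j = k)%N /\ f i j != 0.
Definition ps_ord_ge (f : ps) (k : nat) := in_mpow k f.

Definition ps2 := (ps * ps)%type.
Definition ps2_eq (f g : ps2) := ps_eq f.1 g.1 /\ ps_eq f.2 g.2.

Definition nonzerodivisor (f : ps) :=
  forall g, ps_eq (psmul f g) ps0 -> ps_eq g ps0.
Definition nzd_mod (f1 f2 : ps) :=
  forall g, (exists a, ps_eq (psmul f2 g) (psmul a f1)) ->
            exists b, ps_eq g (psmul b f1).
Definition in_ideal2 (g f1 f2 : ps) :=
  exists a b, ps_eq g (psadd (psmul a f1) (psmul b f2)).
Definition regular_seq (f1 f2 : ps) :=
  [/\ nonzerodivisor f1, nzd_mod f1 f2 & ~ in_ideal2 ps1 f1 f2].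

(* 2x2 minor of the Jacobian matrix; I_2(J(f)) is generated by it *)
Definition jacdet (f : ps2) : ps :=
  pssub (psmul (psdx f.1) (psdy f.2)) (psmul (psdy f.1) (psdx f.2)).

Definition ICIS (f : ps2) :=
  [/\ in_m f.1, in_m f.2, regular_seq f.1 f.2 &
      exists k, forall g, in_mpow k g ->
        exists a b c, ps_eq g (psadd (psadd (psmul a f.1) (psmul b f.2))
                                    (psmul c (jacdet f)))].

(* GL(2,R): 2x2 matrices over R with unit determinant *)
Record mat2 := Mat2 { m11 : ps; m12 : ps; m21 : ps; m22 : ps }.
Definition GL2 (U : mat2) :=
  pssub (psmul (m11 U) (m22 U)) (psmul (m12 U) (m21 U)) 0%N 0%N != 0.
(* Aut(R): the F-algebra automorphisms x |-> u, y |-> v, with u,v in m and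
   invertible linear part *)
Definition autR (phi : ps2) :=
  [/\ in_m phi.1, in_m phi.2 &
      phi.1 1%N 0%N * phi.2 0%N 1%N - phi.1 0%N 1%N * phi.2 1%N 0%N != 0].

Definition cact (U : mat2) (phi : ps2) (f : ps2) : ps2 :=
  let g1 := pscomp f.1 phi.1 phi.2 in
  let g2 := pscomp f.2 phi.1 phi.2 in
  (psadd (psmul (m11 U) g1) (psmul (m12 U) g2),
   psadd (psmul (m21 U) g1) (psmul (m22 U) g2)).

(* k-jets: J_k = R^2 / m^(k+1) R^2, realised as truncated pairs *)
Definition jet (k : nat) (f : ps2) : ps2 :=
  (fun i j => if (i + j <= k)%N then f.1 i j else 0,
   fun i j => if (i + j <= k)%N then f.2 i j else 0).
Definition in_Jk (k : nat) (p : ps2) := ps2_eq (jet k p) p.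

Definition Kequiv (k : nat) (f g : ps2) :=
  exists U phi, [/\ GL2 U, autR phi & ps2_eq (jet k (cact U phi f)) (jet k g)].

Definition orbit (k : nat) (p : ps2) : ps2 -> Prop :=
  fun q => exists U phi, [/\ GL2 U, autR phi & ps2_eq q (jet k (cact U phi p))].

Inductive polyfun : (ps2 -> F) -> Prop :=
| pf_const (c : F) : polyfun (fun _ => c)
| pf_coord1 (i j : nat) : polyfun (fun p => p.1 i j)
| pf_coord2 (i j : nat) : polyfun (fun p => p.2 i j)
| pf_add h1 h2 : polyfun h1 -> polyfun h2 -> polyfun (fun p => h1 p + h2 p)
| pf_mul h1 h2 : polyfun h1 -> polyfun h2 -> polyfun (fun p => h1 p * h2 p).

Definition subset (A B : ps2 -> Prop) := forall p, A p -> B p.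
Definition zclosed (C : ps2 -> Prop) :=
  exists S : (ps2 -> F) -> Prop, (forall h, S h -> polyfun h) /\
    forall p, C p <-> (forall h, S h -> h p = 0).
Definition zopen (O : ps2 -> Prop) := zclosed (fun p => ~ O p).
Definition zirred (Z : ps2 -> Prop) :=
  [/\ zclosed Z, exists p, Z p &
      forall Z1 Z2, zclosed Z1 -> zclosed Z2 ->
        subset Z (fun p => Z1 p \/ Z2 p) -> subset Z Z1 \/ subset Z Z2].
Definition zclosure (A : ps2 -> Prop) : ps2 -> Prop :=
  fun p => forall C, zclosed C -> subset A C -> C p.
(* dim A >= n : a chain Z_0 < ... < Z_n of irreducible closed subsets of the
   Zariski closure of A (dim A = Krull dim of its closure) *)
Definition dim_ge (A : ps2 -> Prop) (n : nat) :=
  exists Z : nat -> ps2 -> Prop,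
    (forall l, (l <= n)%N -> zirred (Z l) /\ subset (Z l) (zclosure A)) /\
    (forall l, (l < n)%N -> subset (Z l) (Z l.+1) /\ ~ subset (Z l.+1) (Z l)).
Definition dim_eq (A : ps2 -> Prop) (n : nat) := dim_ge A n /\ ~ dim_ge A n.+1.

Definition orbstrat (k i : nat) : ps2 -> Prop :=
  fun q => in_Jk k q /\ dim_eq (orbit k q) i.
Definition Kinvariant (k : nat) (U : ps2 -> Prop) :=
  forall p q, U p -> orbit k p q -> U q.
Definition inv_nbhd (k : nat) (U : ps2 -> Prop) (p : ps2) :=
  [/\ exists O, zopen O /\ forall q, U q <-> (in_Jk k q /\ O q),
      U p & Kinvariant k U].
Definition modU_le (k : nat) (U : ps2 -> Prop) (m : nat) :=
  forall i d, dim_ge (fun q => U q /\ orbstrat k i q) d -> (d <= m + i)%N.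
Definition modality_eq (k : nat) (p : ps2) (m : nat) :=
  (exists U, inv_nbhd k U p /\ modU_le k U m) /\
  (forall U m', inv_nbhd k U p -> modU_le k U m' -> (m <= m')%N).
Definition Kmodality (f : ps2) (m : nat) :=
  exists k0, forall k, (k0 <= k)%N -> modality_eq k (jet k f) m.
Definition unimodal (f : ps2) := Kmodality f 1.

Definition pX3 := psmon 3 0.
Definition pX2Y := psmon 2 1.
Definition pXY2 := psmon 1 2.
Definition pY3 := psmon 0 3.
Definition normal_form3 (g : ps2) :=
  ps2_eq g (pX3, ps0) \/
  ps2_eq g (pX3, pX2Y) \/
  ps2_eq g (pX3, pXY2) \/
  ps2_eq g (pX3, psadd pY3 pX2Y) \/
  ps2_eq g (pX3, pY3) \/
  ps2_eq g (pX2Y, ps0) \/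
  ps2_eq g (pX2Y, pXY2) \/
  ps2_eq g (pX2Y, psadd pX3 pXY2) \/
  (exists2 lam : F, lam != 0 &
     ps2_eq g (psadd pX3 pX2Y, psadd pY3 (psscale lam pX2Y))) \/
  ps2_eq g (pX2Y, psadd pX3 pY3) \/
  ps2_eq g (psadd pX3 pXY2, ps0).

End PowerSeries.

From HB Require Import structures.
From mathcomp Require Import all_boot all_order all_algebra.
From mathcomp Require Import ring zify.
From Stdlib Require Import Classical_Prop.
Set Implicit Arguments. Unset Strict Implicit. Unset Printing Implicit Defensive.
Import GRing.Theory.
Local Open Scope ring_scope.

(* Only the degree-3 parts of f1 and f2 survive in j_3(f), and on them the
   3-jet contact group acts through its linear part: a constant matrix in
   GL(2,F) mixing the two components and a linear change of coordinates.  So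
   it suffices to bring every pair (P, Q) of binary cubics with P <> 0 to one
   of the listed forms.
   If Q is a multiple of P, the single cubic P is classified by the
   multiplicities of its linear factors.  Otherwise the Jacobian determinant of
   (P, Q) is a binary quartic, which has a nontrivial zero w over the
   algebraically closed field F; some member R of the pencil then has a
   critical point at w, hence (Euler's formula, char F <> 3) a squared linear
   factor.  Moving it to x^2 leaves pairs (x^3, S) or (x^2 y, S), which are
   normalised by completing squares and cubes (char F <> 2, 3). *)

Section BinaryCubics.
Variable F : fieldType.

Lemma exists_complement (b d : F) : (b != 0) || (d != 0) ->
  exists a c, a * d - b * c != 0.
Proof.
have [->|d_neq0] := eqVneq d 0; last by exists 1, 0; rewrite mulr0 subr0 mul1r.
by rewrite orbF => b_neq0; exists 0, 1; rewrite mul0r sub0r mulr1 oppr_eq0.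
Qed.

Lemma dependent_of_det_eq0 (h1 h2 g1 g2 : F) :
  h1 * g2 - h2 * g1 = 0 -> (g1 != 0) || (g2 != 0) ->
  exists l, h1 = l * g1 /\ h2 = l * g2.
Proof.
move=> /eqP; rewrite subr_eq0 => /eqP det0 g_neq0.
have [g1_0|g1_neq0] := eqVneq g1 0.
  have g2_neq0 : g2 != 0 by move: g_neq0; rewrite g1_0 eqxx.
  exists (h2 / g2); split; last by field.
  by apply: (mulIf g2_neq0); rewrite det0 g1_0 !mulr0 mul0r.
exists (h1 / g1); split; first by field.
by apply: (mulIf g1_neq0); rewrite -det0; field.
Qed.

Record cubic := Cubic { c30 : F; c21 : F; c12 : F; c03 : F }.

Definition cubic0 := Cubic 0 0 0 0.

Definition cubic_scale (t : F) (P : cubic) :=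
  Cubic (t * c30 P) (t * c21 P) (t * c12 P) (t * c03 P).

Definition cubic_comb (m1 : F) (P : cubic) (m2 : F) (Q : cubic) :=
  Cubic (m1 * c30 P + m2 * c30 Q) (m1 * c21 P + m2 * c21 Q)
        (m1 * c12 P + m2 * c12 Q) (m1 * c03 P + m2 * c03 Q).

(* [cubic_subst P a b c d] is [P (a x + b y, c x + d y)]. *)
Definition cubic_subst (P : cubic) (a b c d : F) :=
  let: Cubic p0 p1 p2 p3 := P in
  Cubic (p0 * a ^+ 3 + p1 * (a ^+ 2 * c) + p2 * (a * c ^+ 2) + p3 * c ^+ 3)
        (p0 * (3%:R * a ^+ 2 * b) + p1 * (a ^+ 2 * d + 2%:R * a * b * c)
          + p2 * (2%:R * a * c * d + b * c ^+ 2) + p3 * (3%:R * c ^+ 2 * d))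
        (p0 * (3%:R * a * b ^+ 2) + p1 * (2%:R * a * b * d + b ^+ 2 * c)
          + p2 * (a * d ^+ 2 + 2%:R * b * c * d) + p3 * (3%:R * c * d ^+ 2))
        (p0 * b ^+ 3 + p1 * (b ^+ 2 * d) + p2 * (b * d ^+ 2) + p3 * d ^+ 3).

Definition cubic_eval (P : cubic) (x y : F) :=
  c30 P * x ^+ 3 + c21 P * x ^+ 2 * y + c12 P * x * y ^+ 2 + c03 P * y ^+ 3.
Definition cubic_dx (P : cubic) (x y : F) :=
  3%:R * c30 P * x ^+ 2 + 2%:R * c21 P * x * y + c12 P * y ^+ 2.
Definition cubic_dy (P : cubic) (x y : F) :=
  c21 P * x ^+ 2 + 2%:R * c12 P * x * y + 3%:R * c03 P * y ^+ 2.

Lemma cubic_euler P x y :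
  3%:R * cubic_eval P x y = x * cubic_dx P x y + y * cubic_dy P x y.
Proof. rewrite /cubic_eval /cubic_dx /cubic_dy; ring. Qed.

Lemma cubic_dx_comb m1 P m2 Q x y :
  cubic_dx (cubic_comb m1 P m2 Q) x y = m1 * cubic_dx P x y + m2 * cubic_dx Q x y.
Proof. rewrite /cubic_dx /=; ring. Qed.

Lemma cubic_dy_comb m1 P m2 Q x y :
  cubic_dy (cubic_comb m1 P m2 Q) x y = m1 * cubic_dy P x y + m2 * cubic_dy Q x y.
Proof. rewrite /cubic_dy /=; ring. Qed.

Lemma c12_cubic_subst P a b c d :
  c12 (cubic_subst P a b c d) = a * cubic_dx P b d + c * cubic_dy P b d.
Proof. case: P => p0 p1 p2 p3; rewrite /cubic_dx /cubic_dy /=; ring. Qed.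

Lemma c03_cubic_subst P a b c d : c03 (cubic_subst P a b c d) = cubic_eval P b d.
Proof. case: P => p0 p1 p2 p3; rewrite /cubic_eval /=; ring. Qed.

Lemma cubic_subst_comb m1 P m2 Q a b c d :
  cubic_subst (cubic_comb m1 P m2 Q) a b c d =
  cubic_comb m1 (cubic_subst P a b c d) m2 (cubic_subst Q a b c d).
Proof. by case: P Q => [p0 p1 p2 p3] [q0 q1 q2 q3]; rewrite /cubic_comb /=; congr Cubic; ring. Qed.

Lemma cubic_subst_comp P a1 b1 c1 d1 a2 b2 c2 d2 :
  cubic_subst (cubic_subst P a1 b1 c1 d1) a2 b2 c2 d2 =
  cubic_subst P (a1 * a2 + b1 * c2) (a1 * b2 + b1 * d2)
                (c1 * a2 + d1 * c2) (c1 * b2 + d1 * d2).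
Proof. case: P => p0 p1 p2 p3 /=; congr Cubic; ring. Qed.

Lemma cubic_subst_id P : cubic_subst P 1 0 0 1 = P.
Proof. case: P => p0 p1 p2 p3 /=; congr Cubic; ring. Qed.

Lemma cubic_comb_comb m1 n1 m2 n2 u1 u2 P Q :
  cubic_comb u1 (cubic_comb m1 P n1 Q) u2 (cubic_comb m2 P n2 Q) =
  cubic_comb (u1 * m1 + u2 * m2) P (u1 * n1 + u2 * n2) Q.
Proof. rewrite /cubic_comb /=; congr Cubic; ring. Qed.

Lemma cubic_subst_eq0 P a b c d : a * d - b * c != 0 ->
  cubic_subst P a b c d = cubic0 -> P = cubic0.
Proof.
move=> det_neq0 P'0; set e := a * d - b * c.
have := cubic_subst_comp P a b c d (d / e) (- b / e) (- c / e) (a / e).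
have -> : a * (d / e) + b * (- c / e) = 1 by rewrite /e; field.
have -> : a * (- b / e) + b * (a / e) = 0 by rewrite /e; field.
have -> : c * (d / e) + d * (- c / e) = 0 by rewrite /e; field.
have -> : c * (- b / e) + d * (a / e) = 1 by rewrite /e; field.
by rewrite cubic_subst_id P'0 => <- /=; congr Cubic; ring.
Qed.

(* The linear part of the contact group acting on cubic parts of 3-jets:
   [(m_ij)] mixes the components, [(a b; c d)] changes coordinates. *)
Definition cubic_pair_act (m11 m12 m21 m22 a b c d : F) (p : cubic * cubic) :=
  (cubic_comb m11 (cubic_subst p.1 a b c d) m12 (cubic_subst p.2 a b c d),
   cubic_comb m21 (cubic_subst p.1 a b c d) m22 (cubic_subst p.2 a b c d)).

Definition cubic_pair_equiv (p q : cubic * cubic) :=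
  exists m11 m12 m21 m22 a b c d,
    [/\ m11 * m22 - m12 * m21 != 0, a * d - b * c != 0
      & q = cubic_pair_act m11 m12 m21 m22 a b c d p].

Lemma cubic_pair_equiv_refl p : cubic_pair_equiv p p.
Proof.
exists 1, 0, 0, 1, 1, 0, 0, 1; rewrite !mulr1 !mulr0 subr0 oner_neq0; split=> //.
case: p => [[p0 p1 p2 p3] [q0 q1 q2 q3]].
by rewrite /cubic_pair_act /cubic_comb /=; congr pair; congr Cubic; ring.
Qed.

Lemma cubic_pair_equiv_trans p q r :
  cubic_pair_equiv p q -> cubic_pair_equiv q r -> cubic_pair_equiv p r.
Proof.
move=> [m11 [m12 [m21 [m22 [a [b [c [d [detM detA ->]]]]]]]]].
move=> [n11 [n12 [n21 [n22 [a' [b' [c' [d' [detN detA' ->]]]]]]]]].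
exists (n11 * m11 + n12 * m21), (n11 * m12 + n12 * m22),
       (n21 * m11 + n22 * m21), (n21 * m12 + n22 * m22).
exists (a * a' + b * c'), (a * b' + b * d'), (c * a' + d * c'), (c * b' + d * d').
split.
- have -> : (n11 * m11 + n12 * m21) * (n21 * m12 + n22 * m22)
            - (n11 * m12 + n12 * m22) * (n21 * m11 + n22 * m21)
          = (n11 * n22 - n12 * n21) * (m11 * m22 - m12 * m21) by ring.
  exact: mulf_neq0.
- have -> : (a * a' + b * c') * (c * b' + d * d') - (a * b' + b * d') * (c * a' + d * c')
          = (a * d - b * c) * (a' * d' - b' * c') by ring.
  exact: mulf_neq0.
- rewrite /cubic_pair_act; cbn [fst snd].
  by rewrite !cubic_subst_comb !cubic_subst_comp !cubic_comb_comb.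
Qed.

Definition cubic_jacobian (P Q : cubic) x y :=
  cubic_dx P x y * cubic_dy Q x y - cubic_dy P x y * cubic_dx Q x y.

(* Coefficient lists of binary forms of degree [n] are indexed so that entry
   [i] multiplies [x ^+ i * y ^+ (n - i)]. *)
Definition cubic_coefs P := [:: c03 P; c12 P; c21 P; c30 P].

Definition cubic_jacobian_coefs P Q :=
  [:: 3%:R * (c12 P * c03 Q - c03 P * c12 Q); 6%:R * (c21 P * c03 Q - c03 P * c21 Q);
      9%:R * (c30 P * c03 Q - c03 P * c30 Q) + 3%:R * (c21 P * c12 Q - c12 P * c21 Q);
      6%:R * (c30 P * c12 Q - c12 P * c30 Q); 3%:R * (c30 P * c21 Q - c21 P * c30 Q)].

Lemma cubic_evalE P x y :
  cubic_eval P x y = \sum_(i < 4) (cubic_coefs P)`_i * x ^+ i * y ^+ (3 - i).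
Proof. by rewrite /cubic_eval !big_ord_recr big_ord0 /=; ring. Qed.

Lemma cubic_jacobianE P Q x y :
  cubic_jacobian P Q x y =
  \sum_(i < 5) (cubic_jacobian_coefs P Q)`_i * x ^+ i * y ^+ (4 - i).
Proof. by rewrite /cubic_jacobian /cubic_dx /cubic_dy !big_ord_recr big_ord0 /=; ring. Qed.

Lemma cubic_pencil_neq0 P Q l : P <> cubic0 -> ~ (exists t, Q = cubic_scale t P) ->
  cubic_comb 1 P (- l) Q <> cubic0.
Proof.
move=> P_neq0 indep PlQ0; apply: indep.
have [l0|l_neq0] := eqVneq l 0.
  case: P_neq0; rewrite -PlQ0 l0.
  by case: P Q {PlQ0} => [? ? ? ?] [? ? ? ?]; rewrite /cubic_comb /=; congr Cubic; ring.
exists l^-1; case: P Q PlQ0 {P_neq0} => [p0 p1 p2 p3] [q0 q1 q2 q3].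
rewrite /cubic_comb /cubic_scale /= => -[] /eqP + /eqP + /eqP + /eqP.
rewrite !mul1r !mulNr !subr_eq0 => /eqP-> /eqP-> /eqP-> /eqP->.
by congr Cubic; field.
Qed.

Definition cubic_normal_form (N : cubic * cubic) :=
  N = (Cubic 1 0 0 0, Cubic 0 0 0 0) \/ N = (Cubic 1 0 0 0, Cubic 0 1 0 0) \/
  N = (Cubic 1 0 0 0, Cubic 0 0 1 0) \/ N = (Cubic 1 0 0 0, Cubic 0 1 0 1) \/
  N = (Cubic 1 0 0 0, Cubic 0 0 0 1) \/ N = (Cubic 0 1 0 0, Cubic 0 0 0 0) \/
  N = (Cubic 0 1 0 0, Cubic 0 0 1 0) \/ N = (Cubic 0 1 0 0, Cubic 1 0 1 0) \/
  (exists2 l : F, l != 0 & N = (Cubic 1 1 0 0, Cubic 0 l 0 1)) \/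
  N = (Cubic 0 1 0 0, Cubic 1 0 0 1) \/ N = (Cubic 1 0 1 0, Cubic 0 0 0 0).

Definition has_normal_form (p : cubic * cubic) :=
  exists2 N, cubic_normal_form N & cubic_pair_equiv p N.

Lemma has_normal_form_nf N : cubic_normal_form N -> has_normal_form N.
Proof. by exists N => //; apply: cubic_pair_equiv_refl. Qed.

Lemma has_normal_form_subst a b c d p q : a * d - b * c != 0 ->
  (cubic_subst p.1 a b c d, cubic_subst p.2 a b c d) = q ->
  has_normal_form q -> has_normal_form p.
Proof.
move=> det_neq0 <- [N nfN eqN]; exists N => //.
apply: cubic_pair_equiv_trans eqN; exists 1, 0, 0, 1, a, b, c, d.
rewrite !mulr1 !mulr0 subr0 oner_neq0; split=> //.
case: p => [[p0 p1 p2 p3] [q0 q1 q2 q3]].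
by rewrite /cubic_pair_act /cubic_comb /=; congr pair; congr Cubic; ring.
Qed.

Lemma has_normal_form_comb m11 m12 m21 m22 p q : m11 * m22 - m12 * m21 != 0 ->
  (cubic_comb m11 p.1 m12 p.2, cubic_comb m21 p.1 m22 p.2) = q ->
  has_normal_form q -> has_normal_form p.
Proof.
move=> det_neq0 <- [N nfN eqN]; exists N => //.
apply: cubic_pair_equiv_trans eqN; exists m11, m12, m21, m22, 1, 0, 0, 1.
rewrite !mulr1 !mulr0 subr0 oner_neq0; split=> //.
by rewrite /cubic_pair_act; cbn [fst snd]; rewrite !cubic_subst_id.
Qed.

End BinaryCubics.

Section ThreeJets.
Variable F : fieldType.
Implicit Types f h : ps F.
Arguments psexp : simpl never.
Arguments psmul : simpl never.

Lemma psmul_addl f g h i j : psmul (psadd f g) h i j = psmul f h i j + psmul g h i j.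
Proof.
rewrite /psmul /psadd -big_split /=; apply: eq_bigr => a _.
by rewrite -big_split /=; apply: eq_bigr => b _; rewrite mulrDl.
Qed.

Lemma psmul_scalel c f h i j : psmul (psscale c f) h i j = c * psmul f h i j.
Proof.
rewrite /psmul /psscale mulr_sumr; apply: eq_bigr => a _.
by rewrite mulr_sumr; apply: eq_bigr => b _; rewrite mulrA.
Qed.

Lemma psmul_mon p q h i j : psmul (psmon F p q) h i j =
  if (p <= i)%N && (q <= j)%N then h (i - p)%N (j - q)%N else 0.
Proof.
rewrite /psmul /psmon.
transitivity (\sum_(a < i.+1 | nat_of_ord a == p)
   \sum_(b < j.+1 | nat_of_ord b == q) h (i - a)%N (j - b)%N).
  rewrite [RHS]big_mkcond; apply: eq_bigr => a _; case: eqP => _ /=.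
    by rewrite [RHS]big_mkcond; apply: eq_bigr => b _; case: eqP; rewrite ?mul1r ?mul0r.
  by rewrite big1 // => b _; rewrite mul0r.
rewrite (big_ord1_eq _ (fun a => \sum_(b < j.+1 | nat_of_ord b == q) h (i - a)%N (j - b)%N)).
by rewrite (big_ord1_eq _ (fun b => h (i - p)%N (j - b)%N)) !ltnS; case: (p <= i)%N.
Qed.

Lemma psmon_neq a b i j : (i + j != a + b)%N -> psmon F a b i j = 0.
Proof.
move=> ij; rewrite /psmon; case: (i =P a) => [ia|//]; case: (j =P b) => [jb|//].
by rewrite ia jb eqxx in ij.
Qed.

Definition psconst (u : F) : ps F := psscale u (ps1 F).

Lemma psmul_psconst u h i j : psmul (psconst u) h i j = u * h i j.
Proof. by rewrite /psconst psmul_scalel /ps1 psmul_mon !subn0. Qed.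

Definition pslin (a b : F) : ps F :=
  psadd (psscale a (psmon F 1 0)) (psscale b (psmon F 0 1)).

Lemma psmul_pslin a b h i j : psmul (pslin a b) h i j =
  (if i is i'.+1 then a * h i' j else 0) + (if j is j'.+1 then b * h i j' else 0).
Proof.
rewrite /pslin psmul_addl !psmul_scalel !psmul_mon.
by case: i => [|i]; case: j => [|j] /=; rewrite ?mulr0 ?subn0 ?subSS ?subn0.
Qed.

Lemma psexp_pslin a b n i j : psexp (pslin a b) n i j =
  if (i + j == n)%N then 'C(n, i)%:R * (a ^+ i * b ^+ j) else 0.
Proof.
elim: n i j => [|n IHn] i j.
  by rewrite /psexp /= /ps1 /psmon; case: i => [|i]; case: j => [|j] //=; rewrite mul1r mulr1.
rewrite /psexp iterS -/(psexp _ n) psmul_pslin.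
case: i => [|i]; case: j => [|j] /=; rewrite ?IHn ?mulr0 ?addr0 ?add0r //.
- rewrite !add0n eqSS; case: eqP => _; rewrite ?mulr0 // !bin0 !expr0 exprS; ring.
- rewrite !addn0 eqSS; case: eqP => [<-|_]; rewrite ?mulr0 // !binn !expr0 exprS; ring.
- rewrite !addSn !addnS !eqSS; case: eqP => _; rewrite ?mulr0 ?addr0 // binS natrD !exprS; ring.
Qed.

Lemma pscomp_mpow3 f u v : in_mpow 3 f -> in_mpow 3 (pscomp f u v).
Proof.
move=> f3 i j ij; rewrite /pscomp big1 // => [[a a_lt]] _ /=.
by rewrite big1 // => [[b b_lt]] _ /=; rewrite f3 ?mul0r //; move: b_lt ij; lia.
Qed.

Lemma pscomp_mpow_coef n f u v i j : (i + j = n)%N -> in_mpow n f ->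
  pscomp f u v i j =
  \sum_(a < n.+1) f a (n - a)%N * psmul (psexp u a) (psexp v (n - a)) i j.
Proof.
move=> <- fn; rewrite /pscomp; apply: eq_bigr => [[a a_lt]] _ /=.
rewrite subSn; last by rewrite -ltnS.
rewrite big_ord_recr /= big1 ?add0r // => [[b b_lt]] _ /=.
by rewrite fn ?mul0r // -ltn_subRL.
Qed.

Definition cubic_part h : cubic F := Cubic (h 3 0)%N (h 2 1)%N (h 1 2)%N (h 0 3)%N.

Lemma cubic_part_pscomp_lin f a b c d : in_mpow 3 f ->
  cubic_part (pscomp f (pslin a b) (pslin c d)) =
  cubic_subst (cubic_part f) a b c d.
Proof.
have binC32 : 'C(3, 2) = 3 by [].
move=> f3; rewrite /cubic_part /=; congr Cubic;
  rewrite (@pscomp_mpow_coef 3) // !big_ord_recr big_ord0 /= ?subSS ?subn0 ?subnn;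
  rewrite /psmul !big_ord_recr !big_ord0 /= ?subSS ?subn0 ?subnn;
  rewrite !psexp_pslin /= ?binn ?bin0 ?bin1 ?binC32; ring.
Qed.

Definition cubic_ps (P : cubic F) : ps F :=
  psadd (psadd (psadd (psscale (c30 P) (pX3 F)) (psscale (c21 P) (pX2Y F)))
               (psscale (c12 P) (pXY2 F))) (psscale (c03 P) (pY3 F)).

Lemma cubic_ps_comb m1 P m2 Q i j :
  cubic_ps (cubic_comb m1 P m2 Q) i j = m1 * cubic_ps P i j + m2 * cubic_ps Q i j.
Proof. rewrite /cubic_ps /psadd /psscale /=; ring. Qed.

Lemma cubic_part_ps P : cubic_part (cubic_ps P) = P.
Proof.
case: P => p0 p1 p2 p3.
by rewrite /cubic_part /cubic_ps /psadd /psscale /pX3 /pX2Y /pXY2 /pY3 /psmon /=; congr Cubic; ring.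
Qed.

Lemma in_mpow_cubic_ps P : in_mpow 3 (cubic_ps P).
Proof.
move=> i j ij; have ij_neq3 : (i + j != 3)%N by rewrite ltn_eqF.
by rewrite /cubic_ps /psadd /psscale /pX3 /pX2Y /pXY2 /pY3 !psmon_neq // !mulr0 !addr0.
Qed.

Lemma cubic_ps_part h i j : in_mpow 3 h -> (i + j <= 3)%N ->
  h i j = cubic_ps (cubic_part h) i j.
Proof.
move=> h3; rewrite leq_eqVlt => /orP[/eqP ij3|ij_lt3]; last first.
  by rewrite h3 // in_mpow_cubic_ps.
rewrite /cubic_ps /psadd /psscale /pX3 /pX2Y /pXY2 /pY3 /psmon /=.
by case: i j ij3 => [|[|[|[|i]]]] [|[|[|[|j]]]] //= _; ring.
Qed.

Lemma Kequiv3_of_cubic_pair_equiv (f g : ps2 F) :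
  in_mpow 3 f.1 -> in_mpow 3 f.2 -> in_mpow 3 g.1 -> in_mpow 3 g.2 ->
  cubic_pair_equiv (cubic_part f.1, cubic_part f.2) (cubic_part g.1, cubic_part g.2) ->
  Kequiv 3 f g.
Proof.
move=> f1 f2 g1 g2 [m11 [m12 [m21 [m22 [a [b [c [d [detM detA]]]]]]]]].
rewrite /cubic_pair_act; cbn [fst snd]; rewrite -!cubic_part_pscomp_lin //.
move=> /pair_equal_spec[g1E g2E].
exists (Mat2 (psconst m11) (psconst m12) (psconst m21) (psconst m22)).
exists (pslin a b, pslin c d); split.
- rewrite /GL2 /pssub /psadd /psopp /= !psmul_psconst.
  by rewrite /psconst /psscale /ps1 /psmon /= !mulr1.
- rewrite /autR /in_m /pslin /psadd /psscale /psmon /= !mulr0 !mulr1 !addr0 !add0r.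
  by split.
have h1 : in_mpow 3 (pscomp f.1 (pslin a b) (pslin c d)) by apply: pscomp_mpow3.
have h2 : in_mpow 3 (pscomp f.2 (pslin a b) (pslin c d)) by apply: pscomp_mpow3.
split=> i j; rewrite /jet /cact /psadd /= !psmul_psconst; case: leqP => // ij;
  rewrite (cubic_ps_part h1 ij) (cubic_ps_part h2 ij) -cubic_ps_comb.
  by rewrite -g1E -(cubic_ps_part g1 ij).
by rewrite -g2E -(cubic_ps_part g2 ij).
Qed.

Ltac ps2_ring := split=> i j; rewrite /cubic_ps /psadd /psscale /ps0 /=; ring.

Lemma normal_form3_cubic_ps N : cubic_normal_form N ->
  normal_form3 (cubic_ps N.1, cubic_ps N.2).
Proof.
rewrite /normal_form3;
case=> [->|[->|[->|[->|[->|[->|[->|[->|[[l l_neq0 ->]|[->|->]]]]]]]]]];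
  try by repeat first [left; ps2_ring | right]; ps2_ring.
by do 8 right; left; exists l => //; ps2_ring.
Qed.

End ThreeJets.

Section Classification.
Variable F : closedFieldType.
Hypothesis two_neq0 : 2%:R != 0 :> F.
Hypothesis three_neq0 : 3%:R != 0 :> F.
Implicit Types P Q R S : cubic F.

Lemma exists_nth_root n (e : F) : (0 < n)%N -> e != 0 ->
  exists2 x : F, x != 0 & x ^+ n = e.
Proof.
case: n => // n _ e_neq0.
have [x xn] := @solve_monicpoly F n.+1 (fun i => if i == 0%N then e else 0) isT.
have {}xn : x ^+ n.+1 = e.
  by rewrite xn big_ord_recl /= expr0 mulr1 big1 ?addr0 // => i _; rewrite mul0r.
by exists x => //; apply: contra_neq e_neq0 => x0; rewrite -xn x0 expr0n.
Qed.

Lemma binary_form_has_zero n (c : nat -> F) : (0 < n)%N ->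
  exists w1 w2, ((w1 != 0) || (w2 != 0)) /\
                \sum_(i < n.+1) c i * w1 ^+ i * w2 ^+ (n - i) = 0.
Proof.
move=> n_gt0; have [cn0|cn_neq0] := eqVneq (c n) 0.
  exists 1, 0; rewrite oner_neq0; split=> //.
  rewrite big_ord_recr /= subnn cn0 !mul0r addr0 big1 // => i _.
  by rewrite expr0n subn_eq0 leqNgt ltn_ord mulr0.
have [t Ht] := @solve_monicpoly F n (fun i => - c i / c n) n_gt0.
exists t, 1; rewrite oner_neq0 orbT; split=> //.
rewrite big_ord_recr /= subnn !expr1n !mulr1.
under eq_bigr => i _ do rewrite expr1n mulr1.
rewrite Ht mulr_sumr -big_split /= big1 // => i _.
by field.
Qed.

Ltac pair_eq := rewrite /cubic_comb /=; congr pair; congr Cubic.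
Ltac field_nz := field; repeat (apply/andP; split); by [].
Ltac det_nz := rewrite ?mulr1 ?mul1r ?mul0r ?mulr0 ?subr0 ?sub0r ?oppr_eq0;
  repeat (apply: mulf_neq0 || apply: expf_neq0 || rewrite invr_eq0 || rewrite oppr_eq0);
  by rewrite ?oner_neq0.
Ltac normal_form_case := apply: has_normal_form_nf; rewrite /cubic_normal_form;
  repeat first [by left | right].

Lemma has_normal_form_x3_no_y3 (s1 s2 : F) :
  has_normal_form (Cubic 1 0 0 0, Cubic 0 s1 s2 0).
Proof.
have [->|s2_neq0] := eqVneq s2 0.
  have [->|s1_neq0] := eqVneq s1 0; first by normal_form_case.
  apply: (has_normal_form_comb (m11 := 1) (m12 := 0) (m21 := 0) (m22 := s1^-1)
    (q := (Cubic 1 0 0 0, Cubic 0 1 0 0))); [det_nz | by pair_eq; field_nz |].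
  by normal_form_case.
pose c := - s1 / (2%:R * s2).
pose e0 := s1 * c + s2 * c ^+ 2.
apply: (has_normal_form_subst (a := 1) (b := 0) (c := c) (d := 1)
   (q := (Cubic 1 0 0 0, Cubic e0 0 s2 0))); [det_nz | by pair_eq; rewrite /e0 /c; field_nz |].
apply: (has_normal_form_comb (m11 := 1) (m12 := 0) (m21 := - e0 / s2) (m22 := s2^-1)
   (q := (Cubic 1 0 0 0, Cubic 0 0 1 0))); [det_nz | by pair_eq; field_nz |].
by normal_form_case.
Qed.

Lemma has_normal_form_x3 S : has_normal_form (Cubic 1 0 0 0, S).
Proof.
case: S => s0 s1 s2 s3.
apply: (has_normal_form_comb (m11 := 1) (m12 := 0) (m21 := - s0) (m22 := 1)
   (q := (Cubic 1 0 0 0, Cubic 0 s1 s2 s3))); [det_nz | by pair_eq; ring |].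
have [->|s3_neq0] := eqVneq s3 0; first exact: has_normal_form_x3_no_y3.
pose c := - s2 / (3%:R * s3).
pose e0 := s1 * c + s2 * c ^+ 2 + s3 * c ^+ 3.
pose e1 := s1 + 2%:R * s2 * c + 3%:R * s3 * c ^+ 2.
apply: (has_normal_form_subst (a := 1) (b := 0) (c := c) (d := 1)
   (q := (Cubic 1 0 0 0, Cubic e0 e1 0 s3))); [det_nz | by pair_eq; rewrite /e0 /e1 /c; field_nz |].
apply: (has_normal_form_comb (m11 := 1) (m12 := 0) (m21 := - e0) (m22 := 1)
   (q := (Cubic 1 0 0 0, Cubic 0 e1 0 s3))); [det_nz | by pair_eq; ring |].
have [->|e1_neq0] := eqVneq e1 0.
  apply: (has_normal_form_comb (m11 := 1) (m12 := 0) (m21 := 0) (m22 := s3^-1)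
    (q := (Cubic 1 0 0 0, Cubic 0 0 0 1))); [det_nz | by pair_eq; field_nz |].
  by normal_form_case.
have [t t_neq0 Ht] := @exists_nth_root 2 (s3 / e1) isT ltac:(det_nz).
apply: (has_normal_form_subst (a := t) (b := 0) (c := 0) (d := 1)
   (q := (Cubic (t ^+ 3) 0 0 0, Cubic 0 s3 0 s3))); [det_nz | by pair_eq; rewrite ?Ht; field_nz |].
apply: (has_normal_form_comb (m11 := (t ^+ 3)^-1) (m12 := 0) (m21 := 0) (m22 := s3^-1)
   (q := (Cubic 1 0 0 0, Cubic 0 1 0 1))); [det_nz | by pair_eq; field_nz |].
by normal_form_case.
Qed.

Lemma has_normal_form_x2y_no_y3 (s0 s2 : F) :
  has_normal_form (Cubic 0 1 0 0, Cubic s0 0 s2 0).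
Proof.
have [->|s2_neq0] := eqVneq s2 0.
  have [->|s0_neq0] := eqVneq s0 0; first by normal_form_case.
  apply: (has_normal_form_comb (m11 := 0) (m12 := s0^-1) (m21 := 1) (m22 := 0)
    (q := (Cubic 1 0 0 0, Cubic 0 1 0 0))); [det_nz | by pair_eq; field_nz |].
  by normal_form_case.
have [->|s0_neq0] := eqVneq s0 0.
  apply: (has_normal_form_comb (m11 := 1) (m12 := 0) (m21 := 0) (m22 := s2^-1)
    (q := (Cubic 0 1 0 0, Cubic 0 0 1 0))); [det_nz | by pair_eq; field_nz |].
  by normal_form_case.
have [t t_neq0 Ht] := @exists_nth_root 2 (s2 / s0) isT ltac:(det_nz).
have -> : s2 = s0 * t ^+ 2 by rewrite Ht; field.
apply: (has_normal_form_subst (a := t) (b := 0) (c := 0) (d := 1)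
   (q := (Cubic 0 (t ^+ 2) 0 0, Cubic (s0 * t ^+ 3) 0 (s0 * t ^+ 3) 0)));
  [det_nz | by pair_eq; field_nz |].
apply: (has_normal_form_comb (m11 := (t ^+ 2)^-1) (m12 := 0) (m21 := 0)
   (m22 := (s0 * t ^+ 3)^-1) (q := (Cubic 0 1 0 0, Cubic 1 0 1 0)));
  [det_nz | by pair_eq; field_nz |].
by normal_form_case.
Qed.

Lemma has_normal_form_x2y_no_xy2 (s0 s3 : F) : s3 != 0 ->
  has_normal_form (Cubic 0 1 0 0, Cubic s0 0 0 s3).
Proof.
move=> s3_neq0; have [->|s0_neq0] := eqVneq s0 0.
  apply: (has_normal_form_subst (a := 0) (b := 1) (c := 1) (d := 0)
    (q := (Cubic 0 0 1 0, Cubic s3 0 0 0))); [det_nz | by pair_eq; ring |].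
  apply: (has_normal_form_comb (m11 := 0) (m12 := s3^-1) (m21 := 1) (m22 := 0)
    (q := (Cubic 1 0 0 0, Cubic 0 0 1 0))); [det_nz | by pair_eq; field_nz |].
  by normal_form_case.
have [t t_neq0 Ht] := @exists_nth_root 3 (s3 / s0) isT ltac:(det_nz).
have -> : s3 = s0 * t ^+ 3 by rewrite Ht; field.
apply: (has_normal_form_subst (a := t) (b := 0) (c := 0) (d := 1)
   (q := (Cubic 0 (t ^+ 2) 0 0, Cubic (s0 * t ^+ 3) 0 0 (s0 * t ^+ 3))));
  [det_nz | by pair_eq; field_nz |].
apply: (has_normal_form_comb (m11 := (t ^+ 2)^-1) (m12 := 0) (m21 := 0)
   (m22 := (s0 * t ^+ 3)^-1) (q := (Cubic 0 1 0 0, Cubic 1 0 0 1)));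
  [det_nz | by pair_eq; field_nz |].
by normal_form_case.
Qed.

Lemma has_normal_form_x2y S : has_normal_form (Cubic 0 1 0 0, S).
Proof.
case: S => s0 s1 s2 s3.
apply: (has_normal_form_comb (m11 := 1) (m12 := 0) (m21 := - s1) (m22 := 1)
   (q := (Cubic 0 1 0 0, Cubic s0 0 s2 s3))); [det_nz | by pair_eq; ring |].
have [->|s3_neq0] := eqVneq s3 0; first exact: has_normal_form_x2y_no_y3.
have [->|s2_neq0] := eqVneq s2 0; first exact: has_normal_form_x2y_no_xy2.
(* Scale so that [S = s x^3 - 3 x y^2 + y^3]; then [y |-> x + y] brings the
   pair to [(x^3 + x^2 y, (s - 2) x^3 - 3 x^2 y + y^3)]. *)
pose u := - (3%:R * s3) / s2.
have u_neq0 : u != 0 by rewrite /u; det_nz.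
apply: (has_normal_form_subst (a := u) (b := 0) (c := 0) (d := 1)
   (q := (Cubic 0 (u ^+ 2) 0 0, Cubic (s0 * u ^+ 3) 0 (- (3%:R * s3)) s3)));
  [det_nz | by pair_eq; rewrite /u; field_nz |].
pose s := s0 * u ^+ 3 / s3.
apply: (has_normal_form_comb (m11 := (u ^+ 2)^-1) (m12 := 0) (m21 := 0) (m22 := s3^-1)
   (q := (Cubic 0 1 0 0, Cubic s 0 (- 3%:R) 1))); [det_nz | by pair_eq; rewrite /s; field_nz |].
apply: (has_normal_form_subst (a := 1) (b := 0) (c := 1) (d := 1)
   (q := (Cubic 1 1 0 0, Cubic (s - 2%:R) (- 3%:R) 0 1))); [det_nz | by pair_eq; ring |].
apply: (has_normal_form_comb (m11 := 1) (m12 := 0) (m21 := - (s - 2%:R)) (m22 := 1)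
   (q := (Cubic 1 1 0 0, Cubic 0 (- 1 - s) 0 1))); [det_nz | by pair_eq; ring |].
have [->|l_neq0] := eqVneq (- 1 - s) 0; last first.
  by apply: has_normal_form_nf; do 8 right; left; exists (- 1 - s).
apply: (has_normal_form_subst (a := 0) (b := 1) (c := 1) (d := 0)
  (q := (Cubic 0 0 1 1, Cubic 1 0 0 0))); [det_nz | by pair_eq; ring |].
apply: (has_normal_form_comb (m11 := 0) (m12 := 1) (m21 := 1) (m22 := 0)
  (q := (Cubic 1 0 0 0, Cubic 0 0 1 1))); [det_nz | by pair_eq; ring |].
exact: has_normal_form_x3.
Qed.

Lemma has_normal_form_double_factor r0 r1 S : Cubic r0 r1 0 0 <> cubic0 F ->
  has_normal_form (Cubic r0 r1 0 0, S).
Proof.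
move=> R_neq0; case: S => s0 s1 s2 s3.
have [r1_0|r1_neq0] := eqVneq r1 0.
  have r0_neq0 : r0 != 0 by apply: contra_not_neq R_neq0 => ->; rewrite r1_0.
  rewrite r1_0; apply: (has_normal_form_comb (m11 := r0^-1) (m12 := 0) (m21 := 0) (m22 := 1)
     (q := (Cubic 1 0 0 0, Cubic s0 s1 s2 s3))); [det_nz | by pair_eq; field_nz |].
  exact: has_normal_form_x3.
apply: (has_normal_form_subst (a := 1) (b := 0) (c := - r0 / r1) (d := r1^-1)
   (q := (Cubic 0 1 0 0, cubic_subst (Cubic s0 s1 s2 s3) 1 0 (- r0 / r1) r1^-1)));
  [det_nz | by pair_eq; field_nz |].
exact: has_normal_form_x2y.
Qed.

Lemma has_normal_form_singular R S w1 w2 : (w1 != 0) || (w2 != 0) ->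
  R <> cubic0 F -> cubic_dx R w1 w2 = 0 -> cubic_dy R w1 w2 = 0 ->
  has_normal_form (R, S).
Proof.
move=> w_neq0 R_neq0 Rx0 Ry0.
have R0 : cubic_eval R w1 w2 = 0.
  by apply: (mulfI three_neq0); rewrite cubic_euler Rx0 Ry0 !mulr0 addr0.
have [a [c det_neq0]] := exists_complement w_neq0.
have := c12_cubic_subst R a w1 c w2; have := c03_cubic_subst R a w1 c w2.
case E : (cubic_subst R a w1 c w2) => [r0 r1 r2 r3] /=.
rewrite Rx0 Ry0 R0 !mulr0 addr0 => r3_0 r2_0; subst r2 r3.
apply: (has_normal_form_subst det_neq0
  (q := (Cubic r0 r1 0 0, cubic_subst S a w1 c w2))); first by rewrite E.
apply: has_normal_form_double_factor => R'0; apply: R_neq0.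
by apply: (cubic_subst_eq0 det_neq0); rewrite E.
Qed.

Lemma has_normal_form_x_factor q0 q1 q2 : Cubic q0 q1 q2 0 <> cubic0 F ->
  has_normal_form (Cubic q0 q1 q2 0, cubic0 F).
Proof.
move=> Q_neq0; have [q2_0|q2_neq0] := eqVneq q2 0.
  by subst q2; exact: has_normal_form_double_factor.
pose c := - q1 / (2%:R * q2).
pose e := q0 + q1 * c + q2 * c ^+ 2.
apply: (has_normal_form_subst (a := 1) (b := 0) (c := c) (d := 1)
   (q := (Cubic e 0 q2 0, cubic0 F))); [det_nz | by pair_eq; rewrite /e /c; field_nz |].
have [->|e_neq0] := eqVneq e 0.
  apply: (has_normal_form_subst (a := 0) (b := 1) (c := 1) (d := 0)
     (q := (Cubic 0 q2 0 0, cubic0 F))); [det_nz | by pair_eq; ring |].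
  by apply: has_normal_form_double_factor; case=> /eqP; apply/negP.
have [t t_neq0 Ht] := @exists_nth_root 2 (e / q2) isT ltac:(det_nz).
apply: (has_normal_form_subst (a := 1) (b := 0) (c := 0) (d := t)
   (q := (Cubic e 0 e 0, cubic0 F))); [det_nz | by pair_eq; rewrite ?Ht; field_nz |].
apply: (has_normal_form_comb (m11 := e^-1) (m12 := 0) (m21 := 0) (m22 := 1)
   (q := (Cubic 1 0 1 0, cubic0 F))); [det_nz | by pair_eq; field_nz |].
by normal_form_case.
Qed.

Lemma has_normal_form_single P : P <> cubic0 F -> has_normal_form (P, cubic0 F).
Proof.
move=> P_neq0.
have [b [d [bd_neq0]]] := @binary_form_has_zero 3 (nth 0 (cubic_coefs P)) isT.
rewrite -cubic_evalE => Pbd0.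
have [a [c det_neq0]] := exists_complement bd_neq0.
have := c03_cubic_subst P a b c d; rewrite Pbd0.
case E : (cubic_subst P a b c d) => [q0 q1 q2 q3] /= q3_0; subst q3.
apply: (has_normal_form_subst det_neq0 (q := (Cubic q0 q1 q2 0, cubic0 F))).
  by rewrite E /=; congr pair; congr Cubic; ring.
apply: has_normal_form_x_factor => Q0; apply: P_neq0.
by apply: (cubic_subst_eq0 det_neq0); rewrite E.
Qed.

Lemma has_normal_form_jacobian_zero P Q w1 w2 : (w1 != 0) || (w2 != 0) ->
  (forall l, cubic_comb 1 P (- l) Q <> cubic0 F) -> Q <> cubic0 F ->
  cubic_jacobian P Q w1 w2 = 0 -> has_normal_form (P, Q).
Proof.
move=> w_neq0 pencil_neq0 Q_neq0 J0.
case: (boolP ((cubic_dx Q w1 w2 != 0) || (cubic_dy Q w1 w2 != 0))) => [gradQ|].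
  have [l [Px Py]] := dependent_of_det_eq0 J0 gradQ.
  apply: (has_normal_form_comb (m11 := 1) (m12 := - l) (m21 := 0) (m22 := 1)
     (q := (cubic_comb 1 P (- l) Q, Q))); first det_nz.
    by case: Q {Q_neq0 J0 gradQ Px Py pencil_neq0} => *; pair_eq; ring.
  apply: (has_normal_form_singular _ w_neq0 (pencil_neq0 l));
    by rewrite ?cubic_dx_comb ?cubic_dy_comb ?Px ?Py; ring.
rewrite negb_or !negbK => /andP[/eqP Qx0 /eqP Qy0].
apply: (has_normal_form_comb (m11 := 0) (m12 := 1) (m21 := 1) (m22 := 0) (q := (Q, P))).
- det_nz.
- by case: P Q {pencil_neq0 Q_neq0 J0 Qx0 Qy0} => [? ? ? ?] [? ? ? ?]; pair_eq; ring.
exact: has_normal_form_singular _ w_neq0 Q_neq0 Qx0 Qy0.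
Qed.

Lemma has_normal_form_pair P Q : P <> cubic0 F -> has_normal_form (P, Q).
Proof.
move=> P_neq0; case: (classic (exists t, Q = cubic_scale t P)) => [[t ->]|indep].
  apply: (has_normal_form_comb (m11 := 1) (m12 := 0) (m21 := - t) (m22 := 1)
     (q := (P, cubic0 F))); first det_nz.
    by case: P {P_neq0} => *; pair_eq; ring.
  exact: has_normal_form_single.
have [w1 [w2 [w_neq0]]] := @binary_form_has_zero 4 (nth 0 (cubic_jacobian_coefs P Q)) isT.
rewrite -cubic_jacobianE => J0.
apply: (has_normal_form_jacobian_zero w_neq0 _ _ J0) => [l|Q0].
  exact: cubic_pencil_neq0.
by apply: indep; exists 0; rewrite Q0; case: P {P_neq0 J0} => *; congr Cubic; ring.
Qed.

End Classification.

Theorem proposition5p1 (F : closedFieldType)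
  (hchar : forall p : nat, p \in [pchar F] -> (3 < p)%N)
  (f : ps2 F) :
  ICIS f -> unimodal f -> ps_ord_eq f.1 3 -> ps_ord_ge f.2 3 ->
  exists g : ps2 F, normal_form3 g /\ Kequiv 3 f g.
Proof.
move=> _ _ [f1_3 [i [j [ij3 fij_neq0]]]] f2_3.
have char_neq0 p : prime p -> (p <= 3)%N -> p%:R != 0 :> F.
  move=> p_prime p_le3; apply/negP => p0.
  by have := hchar p; rewrite inE p_prime p0 ltnNge p_le3 => /(_ isT).
have P_neq0 : cubic_part f.1 <> cubic0 F.
  move=> P0; move: fij_neq0; rewrite (cubic_ps_part f1_3) ?ij3 // P0.
  by rewrite /cubic_ps /psadd /psscale /= !mul0r !addr0 eqxx.
have [N nfN fN] := has_normal_form_pair (char_neq0 2 isT isT) (char_neq0 3 isT isT)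
  (cubic_part f.2) P_neq0.
exists (cubic_ps N.1, cubic_ps N.2); split; first exact: normal_form3_cubic_ps.
apply: Kequiv3_of_cubic_pair_equiv => //; try exact: in_mpow_cubic_ps.
by cbn [fst snd]; rewrite !cubic_part_ps -surjective_pairing.
Qed.
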